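(* Let $G$ be an infinite countable group such that $\mathbb{Z}$ is a homomorphic image of $G$. For every integer $m\geq 1$, there exists a minimal subshift $X\subseteq \{0,\dots,m-1\}^G$ whose topological sequence entropy $h^*_{top}(X,\sigma,G)$ equals $\log(m)$.
   Context: For a finite set $\Sigma$ with the discrete topology, $\Sigma^G$ carries the product topology and the left shift action $\sigma$ of $G$ given by $\sigma^g(x)(h)=x(g^{-1}h)$ for $g,h\in G$, $x\in\Sigma^G$. A subshift is a nonempty closed $\sigma$-invariant subset $X\subseteq \Sigma^G$. A dynamical system $(X,\varphi,G)$ (continuous action of $G$ on a compact metric space $X$) is minimal if every orbit $\{\varphi^g x:g\in G\}$ is dense. For an open cover $\mathcal U$ of $X$ and a sequence $S=(g_n)_{n\in\mathbb N}$ in $G$, set $h^*_{top}(X,\varphi,G,\mathcal U;S)=\limsup_{n\to\infty}\frac1n\log N\big(\bigvee_{i=1}^n\varphi^{g_i^{-1}}\mathcal U\big)$, where $N(\mathcal C)$ is the minimal cardinality of a subcover of $\mathcal C$; the topological sequence entropy is $h^*_{top}(X,\varphi,G)=\sup_{\mathcal U,S}h^*_{top}(X,\varphi,G,\mathcal U;S)$, the supremum over all open covers and all sequences in $G$. *)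

From HB Require Import structures.
From mathcomp Require Import all_boot all_order all_algebra.
From mathcomp Require Import all_classical all_reals.
From mathcomp Require Import ereal topology normedtype sequences exp.
Set Implicit Arguments. Unset Strict Implicit. Unset Printing Implicit Defensive.
Import Order.TTheory GRing.Theory Num.Theory.
Local Open Scope classical_set_scope.
Local Open Scope ring_scope.

Definition is_group (G : Type) (mul : G -> G -> G) (inv : G -> G) (one : G) : Prop :=
  [/\ forall a b c, mul a (mul b c) = mul (mul a b) c,
      forall a, mul one a = a /\ mul a one = a &
      forall a, mul (inv a) a = one /\ mul a (inv a) = one].

Definition countable_type (G : Type) : Prop := exists f : G -> nat, injective f.
Definition infinite_type (G : Type) : Prop := exists f : nat -> G, injective f.

Definition Z_hom_image (G : Type) (mul : G -> G -> G) : Prop :=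
  exists f : G -> int, (forall a b, f (mul a b) = f a + f b) /\
                       (forall z : int, exists a, f a = z).

Section Shift.
Variables (G : Type) (mul : G -> G -> G) (inv : G -> G) (m : nat).

Definition cfg := G -> 'I_m.

Definition shift (g : G) (x : cfg) : cfg := fun h => x (mul (inv g) h).

(* closed in the product topology of discrete 'I_m: every y all of whose finite
   windows are realised by points of X lies in X *)
Definition closed_cfg (X : set cfg) : Prop :=
  forall y : cfg,
    (forall F : set G, finite_set F -> exists2 x, X x & forall h, F h -> x h = y h) ->
    X y.

Definition subshift (X : set cfg) : Prop :=
  [/\ X !=set0, closed_cfg X & forall g x, X x -> X (shift g x)].

(* relatively open subsets of X (subspace of the product topology) *)
Definition rel_open (X A : set cfg) : Prop :=
  A `<=` X /\
  forall x, A x -> exists F : set G,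
      finite_set F /\ forall y, X y -> (forall h, F h -> y h = x h) -> A y.

Definition minimal_shift (X : set cfg) : Prop :=
  forall x, X x -> forall A, rel_open X A -> A !=set0 ->
    exists g, A (shift g x).

Definition open_cover (X : set cfg) (C : set (set cfg)) : Prop :=
  (forall A, C A -> rel_open X A) /\ X `<=` \bigcup_(A in C) A.

Definition has_subcover (X : set cfg) (C : set (set cfg)) (n : nat) : Prop :=
  exists f : 'I_n -> set cfg, (forall i, C (f i)) /\ X `<=` \bigcup_i f i.

Definition join_cover (C : set (set cfg)) (S : nat -> G) (n : nat) : set (set cfg) :=
  [set B | exists As : nat -> set cfg,
      (forall i, (1 <= i <= n)%N -> C (As i)) /\
      B = [set y | forall i, (1 <= i <= n)%N -> (shift (inv (S i)) @` As i) y]].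
End Shift.

Section Entropy.
Variables (R : realType) (G : Type) (mul : G -> G -> G) (inv : G -> G) (m : nat).

Definition Ncov (X : set (cfg G m)) (C : set (set (cfg G m))) : R :=
  inf [set (n%:R : R) | n in [set n | has_subcover X C n]].

Definition seq_entropy_cover (X : set (cfg G m)) (U : set (set (cfg G m)))
    (S : nat -> G) : \bar R :=
  limn_esup (fun n : nat =>
    ((n%:R)^-1 * ln (Ncov X (join_cover mul inv U S n)))%:E).

Definition seq_entropy (X : set (cfg G m)) : \bar R :=
  ereal_sup [set e | exists (U : set (set (cfg G m))) (S : nat -> G),
                      open_cover X U /\ e = seq_entropy_cover X U S].
End Entropy.

From Pilot Require Import Defs.
From mathcomp Require Import all_boot all_order all_algebra.
From mathcomp Require Import all_classical all_reals.
From mathcomp Require Import ereal topology normedtype sequences exp.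
From mathcomp Require Import finmap zify ring lra.
Import Order.TTheory GRing.Theory Num.Theory.
Local Open Scope classical_set_scope.
Local Open Scope ring_scope.

Set Implicit Arguments. Unset Strict Implicit. Unset Printing Implicit Defensive.

(* A Toeplitz sequence [toeplitz : int -> 'I_m] is built in the mixed radix system with
   radices [r_j = 2 m^(j+1) + 3]: [t] is a hole at level [j] when its [j]-th digit is odd
   and, read in base [m], extends the digit of level [j - 1]; the value at [t] is read off
   the first level at which [t] is not a hole.  Off the holes of level [< k] the sequence
   has period [p_k = r_0 ... r_(k-1)], so it is regularly recurrent and the orbit closure
   [X] of [toeplitz \o f], for [f : G -> int] onto, is a minimal subshift.  Points that
   are holes at all levels [<= K] are more than [2 K] apart, so a window of radius [K]
   sees at most one of them: the [n]-th join of any open cover then needs at most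
   [C m^n] members, and [h* <= log m].  Conversely, choosing [N] prescribes the values at
   [N - p_0, ..., N - p_(n-1)] arbitrarily, so along the sequence [(p_i)] the [n]-th join
   of the cover by first letters needs [m^n] members, and [h* >= log m]. *)

Lemma divz_eqN1 (t d : int) : 0 < d -> - d <= t < 0 -> divz t d = -1.
Proof.
move=> d_gt0 /andP[dt t_lt0].
have : divz (1 * d + t) d = 1 + divz t d by rewrite divzMDl //; lia.
by rewrite divz_small; [lia | apply/andP; split; [lia | rewrite gtz0_abs; lia]].
Qed.

Lemma modzD1 (q r : int) : 0 < r -> modz q r + 1 < r ->
  modz (q + 1) r = modz q r + 1.
Proof.
move=> r_gt0 lt_r.
have -> : q + 1 = divz q r * r + (modz q r + 1) by rewrite {1}(divz_eq q r); ring.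
by rewrite modzMDl modz_small //; have := @modz_ge0 q r; lia.
Qed.

Lemma modzB1 (q r : int) : 0 < r -> 1 <= modz q r ->
  modz (q - 1) r = modz q r - 1.
Proof.
move=> r_gt0 ge1.
have -> : q - 1 = divz q r * r + (modz q r - 1) by rewrite {1}(divz_eq q r); ring.
by rewrite modzMDl modz_small //; have := @ltz_pmod q r r_gt0; lia.
Qed.

Lemma divz_dist_le1 (t t' d : int) : 0 < d -> `|t - t'| < d ->
  `|divz t d - divz t' d| <= 1.
Proof.
move=> d_gt0 close.
have := divz_eq t d; have := divz_eq t' d.
have := @modz_ge0 t d; have := @modz_ge0 t' d.
have := @ltz_pmod t d d_gt0; have := @ltz_pmod t' d d_gt0.
move: (divz t d) (divz t' d) (modz t d) (modz t' d) => a b c c' lt_c' lt_c ge_c' ge_c et' et.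
have {}ge_c : 0 <= c by apply: ge_c; lia.
have {}ge_c' : 0 <= c' by apply: ge_c'; lia.
have : (a - b) * d < 2 * d by nia.
have : - (2 * d) < (a - b) * d by nia.
nia.
Qed.

Section Toeplitz.
Variables (m : nat) (m_gt0 : (0 < m)%N).

Definition radix (j : nat) : nat := (2 * m ^ j.+1 + 3)%N.

Fixpoint period (j : nat) : nat := if j is j'.+1 then (period j' * radix j')%N else 1%N.

Local Notation Pz j := (Posz (period j)).

Lemma radix_ge5 j : (5 <= radix j)%N.
Proof. have : (0 < m ^ j.+1)%N by rewrite expn_gt0 m_gt0. by rewrite /radix; lia. Qed.

Lemma radix_odd j : odd (radix j).
Proof. by rewrite /radix oddD oddM. Qed.

Lemma period_gt0 j : (0 < period j)%N.
Proof. by elim: j => //= j IH; rewrite muln_gt0 IH; have := radix_ge5 j; lia. Qed.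

Lemma periodz_gt0 j : 0 < Pz j.
Proof. by rewrite ltz_nat period_gt0. Qed.

Lemma double_lt_period j : (j.*2 < period j)%N.
Proof. by elim: j => //= j IH; have := radix_ge5 j; nia. Qed.

Lemma period_dvd j k : (j <= k)%N -> (period j %| period k)%N.
Proof.
move=> /subnKC <-; elim: (k - j)%N => [|i IH]; first by rewrite addn0.
by rewrite addnS dvdn_mulr.
Qed.

Definition digit (j : nat) (t : int) : nat := `|modz (divz t (Pz j)) (radix j)%:Z|%N.

Lemma digitE j t : (digit j t)%:Z = modz (divz t (Pz j)) (radix j)%:Z.
Proof. by rewrite /digit gez0_abs // modz_ge0 //; have := radix_ge5 j; lia. Qed.

Lemma digit_lt j t : (digit j t < radix j)%N.
Proof.
have := @ltz_pmod (divz t (Pz j)) (radix j)%:Z.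
by rewrite -digitE; have := radix_ge5 j; lia.
Qed.

Lemma digitDperiod j k t q : (j < k)%N -> digit j (t + Pz k * q) = digit j t.
Proof.
move=> jk; apply/eqP; rewrite -eqz_nat !digitE; apply/eqP.
have /dvdnP [d ->] := period_dvd jk.
rewrite PoszM (_ : _ * q = (d%:Z * q * (radix j)%:Z) * Pz j) /=; last first.
  by rewrite -PoszM; ring.
by rewrite addrC divzMDl ?modzMDl //; have := periodz_gt0 j; lia.
Qed.

Lemma divz_periodS j t :
  divz t (Pz j) = divz t (Pz j.+1) * (radix j)%:Z + (digit j t)%:Z.
Proof. by rewrite digitE /= PoszM divzMA_ge0 // -divz_eq. Qed.

Lemma odd_digit_lt j t : odd (digit j t) -> ((digit j t).+1 < radix j)%N.
Proof.
move=> odd_d; rewrite ltn_neqAle digit_lt andbT.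
by apply: contraTneq odd_d => e; move: (radix_odd j); rewrite -e.
Qed.

Definition hole (j : nat) (t : int) : bool :=
  odd (digit j t) &&
  ((digit j t)./2 %/ m == if j is j'.+1 then (digit j' t)./2 else 0)%N.

Lemma holeDperiod j k t q : (j < k)%N -> hole j (t + Pz k * q) = hole j t.
Proof.
move=> jk; rewrite /hole digitDperiod //.
by case: j jk => // j jk; rewrite digitDperiod // ltnW.
Qed.

Lemma not_hole_abs t : ~~ hole `|t|%N t.
Proof.
suff : digit `|t| t = 0%N \/ digit `|t| t = (radix `|t|).-1.
  by rewrite /hole; case=> -> //; rewrite -(odd_halfK (radix_odd _)) odd_double.
have := double_lt_period `|t|; rewrite -muln2 => small_t.
have [t_ge0|t_lt0] := leP 0 t.
  left; apply/eqP; rewrite -eqz_nat digitE divz_small ?mod0z //.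
  by apply/andP; split => //; lia.
have div_t : divz t (Pz `|t|) = -1 by apply: divz_eqN1; [exact: periodz_gt0 | lia].
right; apply/eqP; rewrite -eqz_nat digitE div_t.
have r_ge5 := radix_ge5 `|t|.
rewrite (_ : -1 = -1 * (radix `|t|)%:Z + ((radix `|t|).-1)%:Z); last by lia.
by rewrite modzMDl modz_small //; lia.
Qed.

Lemma ex_not_hole t : exists j, ~~ hole j t.
Proof. by exists `|t|%N; exact: not_hole_abs. Qed.

Definition level (t : int) : nat := ex_minn (ex_not_hole t).

Lemma levelP t : ~~ hole (level t) t /\ forall j, (j < level t)%N -> hole j t.
Proof.
rewrite /level; case: ex_minnP => j hj j_min; split => // i ij.
by apply/negPn/negP => /j_min; rewrite leqNgt ij.
Qed.

Lemma level_le_abs t : (level t <= `|t|)%N.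
Proof. by rewrite /level; case: ex_minnP => j _ j_min; apply: j_min (not_hole_abs t). Qed.

Lemma level_unique t j :
  ~~ hole j t -> (forall i, (i < j)%N -> hole i t) -> level t = j.
Proof.
move=> not_j below_j; have [not_l below_l] := levelP t.
apply/eqP; rewrite eqn_leq; apply/andP; split; rewrite leqNgt; apply/negP.
  by move/below_l; apply/negP.
by move/below_j; apply/negP.
Qed.

Lemma levelDperiod k t q : (level t < k)%N -> level (t + Pz k * q) = level t.
Proof.
move=> lt_k; have [not_l below_l] := levelP t.
apply: level_unique => [|i il]; first by rewrite holeDperiod.
by rewrite holeDperiod ?below_l // (ltn_trans il).
Qed.

Definition toeplitz (t : int) : 'I_m := Ordinal (ltn_pmod (digit (level t) t)./2 m_gt0).

Lemma toeplitzDperiod k t q : (level t < k)%N -> toeplitz (t + Pz k * q) = toeplitz t.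
Proof. by move=> lt_k; apply: val_inj; rewrite /= levelDperiod // digitDperiod. Qed.

Definition deep (d : nat) (t : int) : Prop := forall j, (j < d)%N -> hole j t.

Lemma deepDperiod d t q : deep d t -> deep d (t + Pz d * q).
Proof. by move=> dt j jd; rewrite holeDperiod // dt. Qed.

Lemma level_lt_not_deep d t : ~ deep d t -> (level t < d)%N.
Proof.
move=> not_deep; rewrite ltnNge; apply/negP => dl.
by apply: not_deep => j jd; apply: (proj2 (levelP t)); exact: leq_trans jd dl.
Qed.

Lemma digit_deep d i t : deep d t -> (i.+1 < d)%N ->
  digit i t = ((digit i.+1 t)./2 %/ m).*2.+1.
Proof.
move=> dt id; have /andP[odd_i _] := dt i (ltnW id).
have /andP[_ /eqP ->] := dt i.+1 id.
by rewrite -[LHS]odd_double_half odd_i.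
Qed.

Lemma deep_divz_eq e t t' : deep e.+1 t -> deep e.+1 t' -> `|t - t'| < Pz e ->
  divz t (Pz e) = divz t' (Pz e).
Proof.
wlog le_tt' : t t' / divz t (Pz e) <= divz t' (Pz e).
  move=> wlog_le dt dt' close.
  have [le|lt] := lerP (divz t (Pz e)) (divz t' (Pz e)); first exact: wlog_le.
  by apply/esym/wlog_le; rewrite 1?distrC // ltW.
move=> dt dt' close; apply/eqP; apply: contraT => neq.
have /andP[odd_t _] := dt e (ltnSn e); have /andP[odd_t' _] := dt' e (ltnSn e).
have succ : divz t' (Pz e) = divz t (Pz e) + 1.
  by have := divz_dist_le1 (periodz_gt0 e) close; move: neq; lia.
(* an odd digit is below [radix e - 1], so moving to the next block does not carry *)
have : (digit e t')%:Z = (digit e t)%:Z + 1.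
  rewrite !digitE succ modzD1 -?digitE //; first by have := radix_ge5 e; lia.
  by have := odd_digit_lt odd_t; lia.
by move/eqP; rewrite -PoszD eqz_nat addn1 => /eqP e_t'; move: odd_t'; rewrite e_t' /= odd_t.
Qed.

Lemma deep_eq e t t' : deep e.+1 t -> deep e.+1 t' -> `|t - t'| < Pz e -> t = t'.
Proof.
move=> dt dt' close.
suff eq_div n i : (i + n)%N = e -> divz t (Pz i) = divz t' (Pz i).
  by have := eq_div e 0%N (add0n e); rewrite /= !divz1.
elim: n i => [|n IH] i; first by rewrite addn0 => ->; exact: deep_divz_eq.
rewrite -addSnnS => ie; have div_S := IH i.+1 ie.
have digit_S : digit i.+1 t = digit i.+1 t' by rewrite /digit div_S.
have ie1 : (i.+1 < e.+1)%N by lia.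
rewrite divz_periodS [RHS]divz_periodS div_S.
by rewrite (digit_deep dt ie1) (digit_deep dt' ie1) digit_S.
Qed.

Section Interpolation.
Variable a : nat -> 'I_m.

Fixpoint code (j : nat) : nat := if j is j'.+1 then (code j' * m + a j)%N else a 0%N.

Fixpoint interp (j : nat) : int :=
  if j is j'.+1 then interp j' + Pz j' * ((code j').*2.+1)%:Z else 0.

Lemma code_lt j : (code j < m ^ j.+1)%N.
Proof.
elim: j => [|j IH] /=; first by rewrite expn1.
by have := ltn_ord (a j.+1); rewrite expnS; nia.
Qed.

Lemma interpP j :
  0 <= interp j < Pz j /\ forall i, (i < j)%N -> digit i (interp j) = (code i).*2.+1.
Proof.
elim: j => [|j [bounds IH]] /=; first by split.
have code_j := code_lt j; have P_gt0 := periodz_gt0 j.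
have code_r : ((code j).*2.+1 < radix j)%N by rewrite /radix -muln2; lia.
split.
  rewrite PoszM; apply/andP; split; first by nia.
  have : ((code j).*2.+1)%:Z + 1 <= (radix j)%:Z by lia.
  by nia.
move=> i; rewrite ltnS leq_eqVlt => /orP[/eqP ->|ij]; last by rewrite digitDperiod // IH.
apply/eqP; rewrite -eqz_nat digitE addrC (mulrC (Pz j)) divzMDl; last by lia.
by rewrite divz_small ?gtz0_abs // addr0 modz_small //; apply/andP; split => //; lia.
Qed.

Lemma toeplitz_interp n i : (i < n)%N -> toeplitz (interp n - Pz i) = a i.
Proof.
move=> i_n; have [_ digit_n] := interpP n.
have hole_n j : (j < n)%N -> hole j (interp n).
  move=> j_n; rewrite /hole digit_n //= odd_double uphalf_double /=.
  case: j j_n => [|j] j_n /=; first by rewrite divn_small.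
  rewrite digit_n /= ?uphalf_double; last by lia.
  by rewrite divnMDl // divn_small ?addn0 // ltn_ord.
have shiftE : interp n - Pz i = interp n + Pz i * -1 by rewrite mulrN1.
(* subtracting [Pz i] lowers the odd digit [i] by one and leaves the lower digits alone *)
have digit_i : digit i (interp n - Pz i) = (code i).*2.
  apply/eqP; rewrite -eqz_nat digitE (_ : _ - _ = -1 * Pz i + interp n); last by ring.
  rewrite divzMDl ?lt0r_neq0 ?periodz_gt0 // addrC.
  have digit_ni := digit_n i i_n; have r_gt0 : 0 < (radix i)%:Z by have := radix_ge5 i; lia.
  have digit_ge1 : 1 <= modz (divz (interp n) (Pz i)) (radix i)%:Z by rewrite -digitE digit_ni.
  by rewrite (modzB1 r_gt0 digit_ge1) -digitE digit_ni; lia.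
have level_i : level (interp n - Pz i) = i.
  apply: level_unique => [|j ji]; first by rewrite /hole digit_i odd_double.
  by rewrite shiftE holeDperiod // hole_n //; lia.
apply: val_inj; rewrite /= level_i digit_i doubleK.
by case: i i_n {digit_i level_i shiftE} => [|i] i_n /=; rewrite ?modnMDl modn_small.
Qed.

Lemma toeplitz_interpolate n :
  exists N : int, forall i, (i < n)%N -> toeplitz (N - Pz i) = a i.
Proof. by exists (interp n); exact: toeplitz_interp. Qed.

End Interpolation.

Lemma toeplitz_recurrent (K : nat) (n : int) : exists P : nat, (0 < P)%N /\
  forall M : int, exists k : int, M <= k < M + P%:Z /\
    forall s : int, `|s| <= K%:Z -> toeplitz (k + s) = toeplitz (n + s).
Proof.
pose k0 := (`|n| + K).+1%N.
exists (period k0); split => [|M]; first exact: period_gt0.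
have P_gt0 := periodz_gt0 k0.
pose q := - divz (n - M) (Pz k0).
exists (n + Pz k0 * q); split.
  have := divz_eq (n - M) (Pz k0); have := @ltz_pmod (n - M) (Pz k0) P_gt0.
  have : 0 <= modz (n - M) (Pz k0) by apply: modz_ge0; lia.
  by rewrite /q; nia.
move=> s s_le; rewrite (_ : _ + s = (n + s) + Pz k0 * q); last by ring.
by apply: toeplitzDperiod; have := level_le_abs (n + s); rewrite /k0; lia.
Qed.

Lemma deep_ball_eq K c t t' : deep K.+1 t -> deep K.+1 t' ->
  `|t - c| <= K%:Z -> `|t' - c| <= K%:Z -> t = t'.
Proof.
move=> dt dt' tc t'c; apply: deep_eq dt dt' _.
by have := double_lt_period K; rewrite -muln2; lia.
Qed.

Lemma toeplitz_window_count (K : nat) : exists C : nat, (0 < C)%N /\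
  forall (n : nat) (s : nat -> int),
  exists Phi : int -> 'I_C * {ffun 'I_n -> 'I_m},
  forall N N', Phi N = Phi N' -> forall (i : nat) (u : int), (i < n)%N ->
    `|u| <= K%:Z -> toeplitz (s i + u + N) = toeplitz (s i + u + N').
Proof.
have P_gt0 := periodz_gt0 K.+1.
have mod_lt N : (`|modz N (Pz K.+1)| < period K.+1)%N.
  have := @ltz_pmod N _ P_gt0; have : 0 <= modz N (Pz K.+1) by apply: modz_ge0; lia.
  by lia.
exists (period K.+1); split => [|n s]; first exact: period_gt0.
(* off the (at most one) deep point of each window, the sequence has period [Pz K.+1] *)
pose deep_in i N := xget 0 [set t | `|t - (s i + N)| <= K%:Z /\ deep K.+1 t].
have deep_inE i N t : `|t - (s i + N)| <= K%:Z -> deep K.+1 t -> deep_in i N = t.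
  move=> tc dt; have := @xgetPex _ 0 [set t | `|t - (s i + N)| <= K%:Z /\ deep K.+1 t].
  by case; [exists t | rewrite -/(deep_in i N) => xc dx; exact: deep_ball_eq dx dt xc tc].
exists (fun N => (Ordinal (mod_lt N), [ffun i : 'I_n => toeplitz (deep_in i N)])).
move=> N N' eq_Phi i u i_n u_K.
have eq_modz : modz N (Pz K.+1) = modz N' (Pz K.+1).
  have : `|modz N (Pz K.+1)|%N = `|modz N' (Pz K.+1)|%N := congr1 (fun p => val p.1) eq_Phi.
  have : 0 <= modz N (Pz K.+1) by apply: modz_ge0; lia.
  have : 0 <= modz N' (Pz K.+1) by apply: modz_ge0; lia.
  by lia.
pose q := divz N' (Pz K.+1) - divz N (Pz K.+1).
have N'E : N' = N + Pz K.+1 * q.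
  by have := divz_eq N (Pz K.+1); have := divz_eq N' (Pz K.+1); rewrite /q; lia.
pose t := s i + u + N.
rewrite N'E (_ : _ + (N + _) = t + Pz K.+1 * q); last by rewrite /t; ring.
have [dt|not_dt] := pselect (deep K.+1 t); last first.
  by rewrite toeplitzDperiod // level_lt_not_deep.
move/(congr1 snd)/ffunP/(_ (Ordinal i_n)): eq_Phi.
rewrite !ffunE (deep_inE i N t) //; last by rewrite /t; lia.
by rewrite (deep_inE i N' _ _ (deepDperiod q dt)) // N'E /t; lia.
Qed.

End Toeplitz.

Lemma finite_set_bounded (T : Type) (F : set T) (phi : T -> nat) :
  finite_set F -> exists k, forall h, F h -> (phi h < k)%N.
Proof.
move=> /(finite_image phi) /finite_fsetP [A A_eq].
exists (\max_(i <- finmap.enum_fset A) i).+1 => h Fh; rewrite ltnS.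
have : phi h \in finmap.enum_fset A by have : [set` A] (phi h) by rewrite -A_eq; exists h.
by move=> /leq_bigmax_seq; apply.
Qed.

Section LebesgueNumber.
Variables (G : Type) (idx : G -> nat) (m : nat).
Hypotheses (idx_inj : injective idx) (m_gt0 : (0 < m)%N).
Variables (X : set (cfg G m)) (U : set (set (cfg G m))).

Definition agree (k : nat) (x y : cfg G m) := forall h, (idx h < k)%N -> x h = y h.

Lemma finite_agree_window k : finite_set [set h | (idx h < k)%N].
Proof.
apply: (@sub_finite_set _ _ (\bigcup_(j in `I_k) [set h | idx h = j])).
  by move=> h /= hk; exists (idx h).
apply: bigcup_finite => [|j _]; first exact: finite_II.
have [[h0 <-]|none] := pselect (exists h0, idx h0 = j).
  apply: (@sub_finite_set _ _ [set h0]); last exact: finite_set1.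
  by move=> h /idx_inj.
apply: (@sub_finite_set _ _ set0); last exact: finite_set0.
by move=> h /= idx_h; apply: none; exists h.
Qed.

Definition window_covered (k : nat) (x : cfg G m) :=
  exists2 A, U A & forall y, X y -> agree k y x -> A y.

Lemma window_covered_mono k k' x :
  (k <= k')%N -> window_covered k x -> window_covered k' x.
Proof.
move=> kk' [A UA Ak]; exists A => // y Xy yx; apply: Ak => // h hk.
by apply: yx; exact: leq_trans hk kk'.
Qed.

Definition bad_prefix (k : nat) (x : cfg G m) :=
  forall k', (k <= k')%N -> exists x', [/\ X x', agree k x' x & ~ window_covered k' x'].

Lemma bad_prefix_agree k x y : agree k x y -> bad_prefix k x -> bad_prefix k y.
Proof.
move=> xy bad k' kk'; have [x' [Xx' x'x unc]] := bad k' kk'.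
by exists x'; split => // h hk; rewrite x'x ?xy.
Qed.

Lemma bad_prefix_step k x : bad_prefix k x ->
  exists v : 'I_m, bad_prefix k.+1 (fun h => if idx h == k then v else x h).
Proof.
pose upd (v : 'I_m) h := if idx h == k then v else x h.
move=> bad; apply: contrapT => no_v.
have good v : exists kv, forall x', X x' -> agree k.+1 x' (upd v) -> window_covered kv x'.
  apply: contrapT => no_kv; apply: no_v; exists v => k' _.
  apply: contrapT => no_x'; apply: no_kv; exists k' => x' Xx' x'v.
  by apply: contrapT => unc; apply: no_x'; exists x'.
have [kv kvP] := choice good.
have [x' [Xx' x'x unc]] := bad (k + \max_v kv v)%N (leq_addr _ _).
have [v x'v] : exists v, agree k.+1 x' (upd v).
  have agree_upd v : (forall h, idx h = k -> x' h = v) -> agree k.+1 x' (upd v).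
    move=> at_k h; rewrite ltnS leq_eqVlt /upd => /orP[/eqP idx_h | lt_k].
      by rewrite idx_h eqxx at_k.
    by rewrite ltn_eqF // x'x.
  have [[h0 e0]|none] := pselect (exists h0, idx h0 = k).
    by exists (x' h0); apply: agree_upd => h e; rewrite (idx_inj (etrans e (esym e0))).
  by exists (Ordinal m_gt0); apply: agree_upd => h e; case: none; exists h.
apply: unc; apply: window_covered_mono (kvP v x' Xx' x'v).
exact: leq_trans (leq_bigmax v) (leq_addl _ _).
Qed.

Lemma bad_prefix_limit x0 : bad_prefix 0 x0 -> exists y, forall k, bad_prefix k y.
Proof.
move=> bad0.
have step (p : nat * cfg G m) : exists y, bad_prefix p.1 p.2 ->
    bad_prefix p.1.+1 y /\ forall h, idx h != p.1 -> y h = p.2 h.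
  case: p => k x; have [bad|] := pselect (bad_prefix k x); last by exists x.
  have [v bad_v] := bad_prefix_step bad; exists (fun h => if idx h == k then v else x h).
  by move=> _; split => // h /negbTE /= ->.
have [next nextP] := choice step.
pose fix xs k := if k is k'.+1 then next (k', xs k') else x0.
have bad_xs k : bad_prefix k (xs k).
  by elim: k => // k IH; exact: (proj1 (nextP (k, xs k) IH)).
exists (fun h => xs (idx h).+1 h) => k; apply: bad_prefix_agree (bad_xs k).
elim: k => // k IH h; rewrite ltnS leq_eqVlt => /orP[/eqP <- // | lt_k].
by rewrite /= (proj2 (nextP (k, xs k) (bad_xs k))) /= ?IH // neq_ltn lt_k.
Qed.

Lemma lebesgue_number : closed_cfg X -> open_cover X U ->
  exists k, forall x, X x -> window_covered k x.
Proof.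
move=> X_closed [U_open X_cover]; apply: contrapT => no_k.
have [y bad_y] : exists y, forall k, bad_prefix k y.
  apply: (@bad_prefix_limit (fun _ => Ordinal m_gt0)) => k' _.
  apply: contrapT => all_covered; apply: no_k; exists k' => x Xx.
  by apply: contrapT => unc; apply: all_covered; exists x.
have Xy : X y.
  apply: X_closed => F finF; have [k Fk] := finite_set_bounded idx finF.
  have [x' [Xx' x'y _]] := bad_y k k (leqnn k).
  by exists x' => // h Fh; exact/x'y/Fk.
have [A UA Ay] := X_cover y Xy; have [_ A_open] := U_open A UA.
have [F [finF FA]] := A_open y Ay; have [k Fk] := finite_set_bounded idx finF.
have [x' [Xx' x'y unc]] := bad_y k k (leqnn k).
apply: unc; exists A => // z Xz zx'; apply: FA => // h Fh.
by rewrite zx' ?x'y //; exact: Fk.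
Qed.

End LebesgueNumber.

Section SequenceEntropyBounds.
Variables (R : realType) (G : Type) (mul : G -> G -> G) (inv : G -> G) (m : nat).
Implicit Types (X : set (cfg G m)) (C : set (set (cfg G m))).

Lemma has_subcover_gt0 X C k : X !=set0 -> has_subcover X C k -> (0 < k)%N.
Proof. by move=> [x Xx] [g [_ g_cover]]; case: k g g_cover => // g /(_ x Xx) [[]]. Qed.

Lemma Ncov_le X C n : has_subcover X C n -> Ncov R X C <= n%:R.
Proof. by move=> sub; apply: ge_inf; [exists 0 => _ [k _ <-] | exists n]. Qed.

Lemma Ncov_ge X C k0 n : (forall k, has_subcover X C k -> (k0 <= k)%N) ->
  has_subcover X C n -> k0%:R <= Ncov R X C.
Proof.
move=> min_k sub; apply: lb_le_inf; first by exists n%:R, n.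
by move=> _ [k sub_k <-]; rewrite ler_nat min_k.
Qed.

Lemma ln_Ncov_le X C n : X !=set0 -> has_subcover X C n -> ln (Ncov R X C) <= ln n%:R.
Proof.
move=> X0 sub; have n_gt0 := has_subcover_gt0 X0 sub.
have N_ge1 : 1%:R <= Ncov R X C.
  by apply: (Ncov_ge _ sub) => k; exact: has_subcover_gt0.
by rewrite ler_ln ?posrE ?ltr0n ?(lt_le_trans ltr01) ?Ncov_le.
Qed.

Lemma ln_Ncov_ge X C k0 n : (0 < k0)%N -> (forall k, has_subcover X C k -> (k0 <= k)%N) ->
  has_subcover X C n -> ln k0%:R <= ln (Ncov R X C).
Proof.
move=> k0_gt0 min_k sub; have N_ge := Ncov_ge min_k sub.
by rewrite ler_ln ?posrE ?ltr0n // (lt_le_trans _ N_ge) ?ltr0n.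
Qed.

Local Open Scope ereal_scope.

Lemma limn_esup_le_EFin (u : nat -> \bar R) (l : R) :
  (forall e : R, (0 < e)%R -> exists N, forall j, (N <= j)%N -> u j <= (l + e)%:E) ->
  limn_esup u <= l%:E.
Proof.
move=> ev_le; apply/lee_addgt0Pr => e e_gt0; have [N uN] := ev_le e e_gt0.
rewrite limn_esup_lim; apply: lime_le; first exact: is_cvg_esups.
exists N => // n /= Nn; apply: ge_ereal_sup => _ [j /= nj <-].
by rewrite -EFinD; apply: uN; exact: leq_trans Nn nj.
Qed.

Lemma limn_esup_ge_EFin (u : nat -> \bar R) (l : R) :
  (forall j, (0 < j)%N -> l%:E <= u j) -> l%:E <= limn_esup u.
Proof.
move=> le_u; rewrite limn_esup_lim; apply: lime_ge; first exact: is_cvg_esups.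
apply: nearW => n; apply: (le_trans (le_u n.+1 isT)).
by apply: ereal_sup_ubound; exists n.+1 => /=.
Qed.

Local Close Scope ereal_scope.

Lemma seq_entropy_cover_le X U S (c : nat) : X !=set0 -> (0 < c)%N -> (0 < m)%N ->
  (forall n, has_subcover X (join_cover mul inv U S n) (c * m ^ n)) ->
  (seq_entropy_cover R mul inv X U S <= (ln m%:R)%:E)%E.
Proof.
move=> X0 c_gt0 m_gt0 sub; apply: limn_esup_le_EFin => e e_gt0.
have lnc_ge0 : 0 <= ln (c%:R : R) by rewrite ln_ge0 // ler1n.
exists (Num.bound (ln (c%:R : R) / e)).+1 => j j_big; rewrite lee_fin.
have j_gt0 : 0 < (j%:R : R) by rewrite ltr0n; lia.
have lnc_le : ln (c%:R : R) <= j%:R * e.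
  rewrite -ler_pdivrMr //; apply/ltW/(lt_le_trans (archi_boundP _)).
    by rewrite divr_ge0 // ltW.
  by rewrite ler_nat ltnW.
have ln_cm : ln ((c * m ^ j)%:R : R) = ln (c%:R : R) + ln (m%:R : R) *+ j.
  have c_pos : (c%:R : R) \in Num.pos by rewrite posrE ltr0n.
  have mj_pos : (m%:R ^+ j : R) \in Num.pos by rewrite posrE exprn_gt0 ?ltr0n.
  by rewrite natrM natrX (lnM c_pos mj_pos) lnXn ?ltr0n.
have := ln_Ncov_le X0 (sub j); rewrite ln_cm => lnN.
rewrite -(ler_pM2l j_gt0) mulrA mulfV ?gt_eqF // mul1r.
by move: lnN; rewrite -[_ *+ j]mulr_natl; lra.
Qed.

Lemma seq_entropy_cover_ge X U S : (0 < m)%N ->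
  (forall n, exists k, has_subcover X (join_cover mul inv U S n) k) ->
  (forall n k, has_subcover X (join_cover mul inv U S n) k -> (m ^ n <= k)%N) ->
  ((ln m%:R)%:E <= seq_entropy_cover R mul inv X U S)%E.
Proof.
move=> m_gt0 ex_sub min_sub; apply: limn_esup_ge_EFin => j j_gt0; rewrite lee_fin.
have [k sub] := ex_sub j.
have mj_gt0 : (0 < m ^ j)%N by rewrite expn_gt0 m_gt0.
have := ln_Ncov_ge mj_gt0 (min_sub j) sub.
rewrite natrX lnXn ?ltr0n // -[_ *+ j]mulr_natl => lnN.
have jR_gt0 : 0 < (j%:R : R) by rewrite ltr0n.
by rewrite -(ler_pM2l jR_gt0) mulrA mulfV ?gt_eqF // mul1r.
Qed.

End SequenceEntropyBounds.

Section GroupShift.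
Variables (G : Type) (mul : G -> G -> G) (inv : G -> G) (one : G) (m : nat).
Hypothesis grpG : is_group mul inv one.

Local Notation shift := (@Defs.shift G mul inv m).

Lemma shiftK g : cancel (shift g) (shift (inv g)).
Proof.
case: grpG => mulA mul1 mulV x; apply: funext => h.
by rewrite /Defs.shift mulA (proj2 (mulV (inv g))) (proj1 (mul1 h)).
Qed.

Lemma shiftVK g : cancel (shift (inv g)) (shift g).
Proof.
case: grpG => mulA mul1 mulV x; apply: funext => h.
by rewrite /Defs.shift mulA (proj1 (mulV (inv g))) (proj1 (mul1 h)).
Qed.

Lemma image_shiftV g (A : set (cfg G m)) y : (shift (inv g) @` A) y <-> A (shift g y).
Proof.
split => [[x Ax <-] | Ay]; first by rewrite shiftVK.
by exists (shift g y); rewrite ?shiftK.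
Qed.

Lemma has_subcover_join (idx : G -> nat) (X : set (cfg G m)) (U : set (set (cfg G m)))
    (k : nat) (S : nat -> G) (n : nat) (T : finType) (Phi : cfg G m -> T) :
  X !=set0 -> (forall g x, X x -> X (shift g x)) ->
  (forall x, X x -> window_covered idx X U k x) ->
  (forall x y, X x -> X y -> Phi x = Phi y ->
     forall i, (1 <= i <= n)%N -> agree idx k (shift (S i) x) (shift (S i) y)) ->
  has_subcover X (join_cover mul inv U S n) #|T|.
Proof.
move=> [x0 Xx0] X_shift X_cov Phi_agree.
have /choice [Ach AchP] : forall x, exists A, X x -> U A /\
    forall y, X y -> agree idx k y x -> A y.
  move=> x; have [Xx|] := pselect (X x); last by exists set0.
  by have [A UA Ak] := X_cov x Xx; exists A.
have /choice [rep repP] : forall t : T,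
    exists x, X x /\ ((exists2 y, X y & Phi y = t) -> Phi x = t).
  move=> t; have [[y Xy <-]|none] := pselect (exists2 y, X y & Phi y = t).
    by exists y; split.
  by exists x0; split => // ex; case: none.
pose B x := [set y | forall i, (1 <= i <= n)%N ->
    (shift (inv (S i)) @` Ach (shift (S i) x)) y].
exists (fun j => B (rep (enum_val j))); split => [j | x Xx].
  have Xr := proj1 (repP (enum_val j)).
  exists (fun i => Ach (shift (S i) (rep (enum_val j)))); split => // i _.
  exact: (proj1 (AchP _ (X_shift _ _ Xr))).
have [Xr rep_x] := repP (Phi x); have {}rep_x := rep_x (ex_intro2 _ _ x Xx erefl).
exists (enum_rank (Phi x)) => //; rewrite enum_rankK => i i_n; apply/image_shiftV.
apply: (proj2 (AchP _ (X_shift _ _ Xr))); first exact: X_shift.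
exact: Phi_agree.
Qed.

End GroupShift.

Section ToeplitzSubshift.
Variables (G : Type) (mul : G -> G -> G) (inv : G -> G) (one : G).
Hypothesis grpG : is_group mul inv one.
Variable f : G -> int.
Hypothesis f_add : forall a b, f (mul a b) = f a + f b.
Variable pre : int -> G.
Hypothesis f_pre : forall z, f (pre z) = z.
Variable idx : G -> nat.
Hypothesis idx_inj : injective idx.
Variables (m : nat) (m_gt0 : (0 < m)%N).

Local Notation shift := (@Defs.shift G mul inv m).
Local Notation toeplitz := (toeplitz m_gt0).
Local Notation Pz j := (Posz (period m j)).

Lemma hom_one : f one = 0.
Proof. by case: grpG => _ mul1 _; have := f_add one one; rewrite (proj1 (mul1 one)); lia. Qed.

Lemma hom_inv g : f (inv g) = - f g.
Proof.
by case: grpG => _ _ mulV; have := f_add (inv g) g; rewrite (proj1 (mulV g)) hom_one; lia.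
Qed.

(* The orbit closure of the pull-back [toeplitz \o f] of the Toeplitz sequence. *)
Definition toeplitz_subshift : set (cfg G m) :=
  [set x | forall F : set G, finite_set F ->
     exists N : int, forall h, F h -> x h = toeplitz (f h + N)].

Local Notation X := toeplitz_subshift.

Lemma toeplitz_subshift_pullback : X (fun h => toeplitz (f h)).
Proof. by move=> F _; exists 0 => h _; rewrite addr0. Qed.

Lemma toeplitz_subshift_shift g x : X x -> X (shift g x).
Proof.
move=> Xx F finF; have [N xN] := Xx _ (finite_image (mul (inv g)) finF).
exists (N - f g) => h Fh; rewrite /Defs.shift xN; last by exists h.
by rewrite f_add hom_inv; congr toeplitz; ring.
Qed.

Lemma toeplitz_subshiftP : subshift mul inv X.
Proof.
split; [by exists (fun h => toeplitz (f h)); exact: toeplitz_subshift_pullback | |].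
  move=> y y_adh F finF; have [x Xx xy] := y_adh F finF.
  by have [N xN] := Xx F finF; exists N => h Fh; rewrite -xy ?xN.
by move=> g x; exact: toeplitz_subshift_shift.
Qed.

Lemma toeplitz_subshift_minimal : minimal_shift mul inv X.
Proof.
move=> x Xx A [AX A_open] [y Ay].
have [F [finF FA]] := A_open y Ay; have [n yn] := AX y Ay F finF.
have [K FK] := finite_set_bounded (fun h => `|f h|%N) finF.
have [P [_ recur]] := toeplitz_recurrent m_gt0 K n.
pose W := \bigcup_(j in `I_P) (mul (inv (pre (- j%:Z))) @` F).
have finW : finite_set W.
  by apply: bigcup_finite => [|j _]; [exact: finite_II | exact: finite_image].
have [N xN] := Xx W finW; have [k [k_near k_rec]] := recur N.
pose j := `|k - N|%N.
have j_P : (j < P)%N by rewrite /j; lia.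
exists (pre (- j%:Z)); apply: FA; first exact: toeplitz_subshift_shift.
move=> h Fh; rewrite /Defs.shift xN; last by exists j => //; exists h.
rewrite f_add hom_inv f_pre opprK (yn h Fh) (_ : _ + _ + N = k + f h); last by rewrite /j; lia.
by rewrite k_rec 1?addrC //; have := FK h Fh; lia.
Qed.

Lemma toeplitz_subshift_join_upper (U : set (set (cfg G m))) : open_cover X U ->
  exists c : nat, (0 < c)%N /\ forall (S : nat -> G) (n : nat),
    has_subcover X (join_cover mul inv U S n) (c * m ^ n).
Proof.
move=> U_cover; have [_ X_closed _] := toeplitz_subshiftP.
have [k X_cov] := lebesgue_number idx_inj m_gt0 X_closed U_cover.
have [K K_bound] := finite_set_bounded (fun h => `|f h|%N) (finite_agree_window idx_inj k).
have [c [c_gt0 count]] := toeplitz_window_count m_gt0 K.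
exists c; split => // S n; have [Phi PhiP] := count n (fun i => - f (S i.+1)).
pose E := \bigcup_(i in `I_n) (mul (inv (S i.+1)) @` [set h | (idx h < k)%N]).
have finE : finite_set E.
  apply: bigcup_finite => [|i _]; first exact: finite_II.
  exact/finite_image/finite_agree_window.
have /choice [Nx NxP] : forall x, exists N : int,
    X x -> forall h, E h -> x h = toeplitz (f h + N).
  move=> x; have [Xx|] := pselect (X x); last by exists 0.
  by have [N xN] := Xx E finE; exists N.
have := @has_subcover_join _ mul inv one m grpG idx X U k S n _ (fun x => Phi (Nx x)).
rewrite card_prod card_ffun !card_ord; apply.
- by exists (fun h => toeplitz (f h)); exact: toeplitz_subshift_pullback.
- by move=> g x; exact: toeplitz_subshift_shift.
- exact: X_cov.
move=> x y Xx Xy eq_Phi [//|i] /andP[_ i_n] h h_k.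
have Eh : E (mul (inv (S i.+1)) h) by exists i => //; exists h.
rewrite /Defs.shift (NxP x Xx _ Eh) (NxP y Xy _ Eh) f_add hom_inv.
by rewrite (PhiP _ _ eq_Phi) //; have := K_bound h h_k; lia.
Qed.

Definition first_letter_cover : set (set (cfg G m)) :=
  [set A | exists a : 'I_m, A = [set x | X x /\ x one = a]].

Definition period_steps (i : nat) : G := pre (Pz i.-1).

Lemma first_letter_open_cover : open_cover X first_letter_cover.
Proof.
split => [A [a ->] | x Xx]; last first.
  by exists [set y | X y /\ y one = x one] => //; exists (x one).
split => [x [] // | x [Xx xa]]; exists [set one]; split; first exact: finite_set1.
by move=> y Xy y_one; split; rewrite ?y_one.
Qed.

(* Along [period_steps] the first letters of a point of [X] can be prescribed arbitrarily,
   so distinct words need distinct members of the join. *)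
Lemma toeplitz_subshift_join_lower n k :
  has_subcover X (join_cover mul inv first_letter_cover period_steps n) k -> (m ^ n <= k)%N.
Proof.
move=> [g [g_join g_cover]].
have /choice [N NP] : forall a : {ffun 'I_n -> 'I_m},
    exists N : int, forall o : 'I_n, toeplitz (N - Pz o) = a o.
  move=> a; pose a' i := if (insub i : option 'I_n) is Some o then a o else Ordinal m_gt0.
  have [N NP] := toeplitz_interpolate m_gt0 a' n.
  by exists N => o; rewrite NP // /a' valK.
pose x a := fun h => toeplitz (f h + N a).
have Xx a : X (x a) by move=> F _; exists (N a).
have first_letter a (o : 'I_n) : shift (period_steps o.+1) (x a) one = a o.
  have [_ mul1 _] := grpG.
  by rewrite /Defs.shift (proj2 (mul1 _)) /x hom_inv f_pre addrC NP.
have /choice [J JP] : forall a, exists j : 'I_k, g j (x a).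
  by move=> a; have [j _ xj] := g_cover _ (Xx a); exists j.
suff J_inj : injective J by have := leq_card J J_inj; rewrite card_ffun !card_ord.
move=> a b Jab; apply/ffunP => o.
have io : (1 <= o.+1 <= n)%N by rewrite ltn_ord.
have [As [As_U gJ]] := g_join (J b); have [c Ac] := As_U o.+1 io.
have letter a' : g (J b) (x a') -> a' o = c.
  rewrite gJ => /(_ o.+1 io)/(image_shiftV grpG); rewrite Ac => -[_].
  by rewrite first_letter.
have gJa : g (J b) (x a) by rewrite -Jab; exact: JP.
by rewrite (letter a gJa) (letter b (JP b)).
Qed.

Lemma seq_entropy_toeplitz_subshift (R : realType) :
  seq_entropy R mul inv X = (ln (m%:R : R))%:E.
Proof.
have X0 : X !=set0 by exists (fun h => toeplitz (f h)); exact: toeplitz_subshift_pullback.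
apply/eqP; rewrite eq_le; apply/andP; split.
  apply: ge_ereal_sup => _ [U [S [U_cover ->]]].
  have [c [c_gt0 sub]] := toeplitz_subshift_join_upper U_cover.
  exact: seq_entropy_cover_le X0 c_gt0 m_gt0 (sub S).
apply: le_trans (ereal_sup_ubound _); last first.
  by exists first_letter_cover, period_steps; split; first exact: first_letter_open_cover.
apply: seq_entropy_cover_ge m_gt0 _ toeplitz_subshift_join_lower => n.
have [c [_ sub]] := toeplitz_subshift_join_upper first_letter_open_cover.
by exists (c * m ^ n)%N.
Qed.

End ToeplitzSubshift.

Unset Implicit Arguments.

Theorem theorem1p1 (R : realType) (G : Type) (mul : G -> G -> G) (inv : G -> G)
    (one : G) (grpG : is_group mul inv one) (cntG : countable_type G)
    (infG : infinite_type G) (homZ : Z_hom_image mul) (m : nat) (hm : (1 <= m)%N) :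
  exists X : set (cfg G m),
    [/\ subshift mul inv X, minimal_shift mul inv X &
        seq_entropy R mul inv X = (ln (m%:R : R))%:E].
Proof.
have [f [f_add f_surj]] := homZ; have [pre f_pre] := choice f_surj.
have [idx idx_inj] := cntG.
exists (toeplitz_subshift f hm); split.
- exact: (toeplitz_subshiftP grpG f_add hm).
- exact: (toeplitz_subshift_minimal grpG f_add f_pre).
- exact: (seq_entropy_toeplitz_subshift grpG f_add f_pre idx_inj hm R).
Qed.
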